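(* Let $0<r<s<\infty$, $\alpha>0$, $\beta>0$. For $n\ge3$ let $h_*=h_*(n)>0$ solve $\frac{2\alpha}{h_*^r}+\frac{2\beta}{h_*^s}=\log n-(\log\log n)^2$ and let $h_+=h_+(n)>0$ solve $\frac{2\alpha}{h_+^r}+\frac{2\beta}{h_+^s}=\log n+(\log\log n)^2$. Then $h_+(n)=(\log n/(2\beta))^{-1/s}(1+o(1))$, and for all $a\in\mathbb{R}$, $b\in\mathbb{R}$, as $n\to\infty$, $$h_+^a\exp\Big(-\frac{2\alpha}{h_+^r}\Big)=h_*^a\exp\Big(-\frac{2\alpha}{h_*^r}\Big)(1+o(1)),\qquad(\log n)^b\,n\exp\Big(-\frac{2\alpha}{h_+^r}-\frac{2\beta}{h_+^s}\Big)=o(1).$$ *)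

From Stdlib Require Export Reals.
From Coquelicot Require Export Coquelicot.
Open Scope R_scope.

Definition Phi (r s alpha beta h : R) : R :=
  2 * alpha / Rpower h r + 2 * beta / Rpower h s.

From Stdlib Require Import Reals Lra.
From Coquelicot Require Import Coquelicot.
Open Scope R_scope.

(* Write t = ln h and y = ln ln n, so that ln n = e^y and the defining equations read
   2 alpha e^(-rt) + 2 beta e^(-st) = e^y +- y^2.  As e^(-rt) = (e^(-st))^(r/s) and
   e^(-st) = O(e^y), the alpha-term is O(e^((r/s) y)) = o(e^y / y); hence
   2 beta e^(-st) = e^y (1 + O(1/y)), which is the first claim.  Subtracting the equations for
   u = ln h_+ <= v = ln h_* gives beta e^(-sv) (e^(s (v - u)) - 1) <= y^2, and
   e^(-sv) >= e^y / (4 beta), so v - u = O(y^2 e^(-y)) and the alpha-terms differ by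
   O(y^2 e^(-(1 - r/s) y)): the logarithm of the ratio in the second claim is O(1/y).
   The last quantity is e^(b y - y^2). *)

Lemma exp_le_exp x y : exp x <= exp y <-> x <= y.
Proof.
  split; intros H.
  - destruct (Rle_or_lt x y) as [|Hlt]; auto.
    apply exp_increasing in Hlt; lra.
  - destruct H as [Hlt|Heq]; [left; apply exp_increasing; exact Hlt | rewrite Heq; lra].
Qed.

Lemma exp_neg_le_inv z : 0 < z -> exp (- z) <= / z.
Proof.
  intros Hz. rewrite exp_Ropp. apply Rinv_le_contravar; [exact Hz|].
  pose proof (exp_ineq1_le z); lra.
Qed.

Lemma pow3_le_exp z : 0 < z -> z ^ 3 <= 27 * exp z.
Proof.
  intros Hz.
  assert (Hsplit : exp z = exp (z / 3) ^ 3).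
  { replace z with (z / 3 + z / 3 + z / 3) at 1 by field.
    rewrite !exp_plus. ring. }
  assert (Hlin : z / 3 <= exp (z / 3)) by (pose proof (exp_ineq1_le (z / 3)); lra).
  rewrite Hsplit. replace (z ^ 3) with (27 * (z / 3) ^ 3) by field.
  apply Rmult_le_compat_l; [lra|]. apply pow_incr; lra.
Qed.

Lemma sqr_mul_exp_neg_le d y :
  0 < d -> 0 < y -> y ^ 2 * exp (- (d * y)) <= 27 / (d ^ 3 * y).
Proof.
  intros Hd Hy.
  pose proof (pow3_le_exp (d * y) ltac:(nra)) as Hcube.
  assert (Hd3 : 0 < d ^ 3) by (apply pow_lt; exact Hd).
  assert (HE : 0 < exp (d * y)) by apply exp_pos.
  rewrite exp_Ropp.
  apply (Rmult_le_reg_r (exp (d * y) * (d ^ 3 * y))).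
  { apply Rmult_lt_0_compat; [exact HE | apply Rmult_lt_0_compat; assumption]. }
  replace (y ^ 2 * / exp (d * y) * (exp (d * y) * (d ^ 3 * y))) with ((d * y) ^ 3)
    by (field; lra).
  replace (27 / (d ^ 3 * y) * (exp (d * y) * (d ^ 3 * y))) with (27 * exp (d * y))
    by (field; split; lra).
  exact Hcube.
Qed.

Lemma sqr_div_exp_le y : 0 < y -> y ^ 2 / exp y <= 27 / y.
Proof.
  intros Hy. pose proof (sqr_mul_exp_neg_le 1 y Rlt_0_1 Hy) as H.
  rewrite Rmult_1_l, pow1, Rmult_1_l, exp_Ropp in H. exact H.
Qed.

Lemma exp_sub_exp_ge a b : (a - b) * exp b <= exp a - exp b.
Proof.
  replace (exp a) with (exp (a - b) * exp b) by (rewrite <- exp_plus; f_equal; ring).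
  pose proof (exp_ineq1_le (a - b)). pose proof (exp_pos b). nra.
Qed.

Lemma exp_gap_rate_le r s u v : 0 <= r <= s -> u <= v ->
  exp (- (r * u)) - exp (- (r * v))
  <= exp ((s - r) * v) * (exp (- (s * u)) - exp (- (s * v))).
Proof.
  intros Hrs Huv.
  assert (Hr : exp (- (r * u)) - exp (- (r * v))
               = exp (- (r * v)) * (exp (r * (v - u)) - 1)).
  { rewrite Rmult_minus_distr_l, Rmult_1_r, <- exp_plus. f_equal. f_equal. ring. }
  assert (Hs : exp ((s - r) * v) * (exp (- (s * u)) - exp (- (s * v)))
               = exp (- (r * v)) * (exp (s * (v - u)) - 1)).
  { rewrite !Rmult_minus_distr_l, Rmult_1_r, <- !exp_plus.
    f_equal; f_equal; ring. }
  rewrite Hr, Hs. apply Rmult_le_compat_l; [left; apply exp_pos|].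
  apply Rplus_le_compat_r, exp_le_exp. nra.
Qed.

Lemma is_lim_seq_abs_sub_le_div (u y : nat -> R) (l C : R) :
  is_lim_seq y p_infty ->
  eventually (fun n => Rabs (u n - l) <= C / y n) -> is_lim_seq u l.
Proof.
  intros Hy Hu.
  assert (HC : is_lim_seq (fun n => C / y n) 0).
  { replace 0 with (C * 0) by ring.
    apply (is_lim_seq_scal_l (fun n => / y n) C (Finite 0)).
    exact (is_lim_seq_inv y p_infty Hy ltac:(discriminate)). }
  apply (is_lim_seq_le_le_loc (fun n => l - C / y n) _ (fun n => l + C / y n)).
  - revert Hu. apply filter_imp. intros n Hn. apply Rabs_le_between' in Hn. exact Hn.
  - replace (Finite l) with (Finite (l - 0)) by (f_equal; ring).
    apply is_lim_seq_minus'; [apply is_lim_seq_const | exact HC].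
  - replace (Finite l) with (Finite (l + 0)) by (f_equal; ring).
    apply is_lim_seq_plus'; [apply is_lim_seq_const | exact HC].
Qed.

Lemma is_lim_seq_ln_ln_INR : is_lim_seq (fun n => ln (ln (INR n))) p_infty.
Proof.
  eapply filterlim_comp; [eapply filterlim_comp|];
    [apply is_lim_seq_INR | apply is_lim_ln_p | apply is_lim_ln_p].
Qed.

Lemma eventually_ln_ln_INR_ge y0 :
  eventually (fun n => (3 <= n)%nat /\ y0 <= ln (ln (INR n))).
Proof.
  apply filter_and; [exists 3%nat; auto|].
  apply (is_lim_seq_ln_ln_INR (fun x => y0 <= x)). exists y0. intros; lra.
Qed.

Lemma ln_ln_pos_gt1 x : 0 < ln (ln x) -> 1 < ln x /\ 1 < x.
Proof.
  assert (Hgt1 : forall z, 0 < ln z -> 1 < z).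
  { intros z Hz. destruct (Rle_or_lt z 0) as [Hz0|Hz0].
    - unfold ln in Hz. destruct (Rlt_dec 0 z); lra.
    - destruct (Rle_or_lt z 1) as [Hz1|]; auto.
      pose proof (ln_le z 1 Hz0 Hz1). rewrite ln_1 in *. lra. }
  intros H. pose proof (Hgt1 _ H). split; auto. apply Hgt1. lra.
Qed.

Section LogCoordinates.

Variables r s alpha beta : R.
Hypotheses (hr : 0 < r) (hrs : r < s) (halpha : 0 < alpha) (hbeta : 0 < beta).

Definition Phi_ln t := Phi r s alpha beta (exp t).

Lemma Phi_lnE t : Phi_ln t = 2 * alpha * exp (- (r * t)) + 2 * beta * exp (- (s * t)).
Proof. unfold Phi_ln, Phi, Rpower, Rdiv. rewrite ln_exp, !exp_Ropp. ring. Qed.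

Lemma Phi_ln_ln h : 0 < h -> Phi r s alpha beta h = Phi_ln (ln h).
Proof. intros Hh. unfold Phi_ln. rewrite exp_ln; auto. Qed.

Lemma Phi_ln_of_Phi_eq h x c : 0 < h -> 0 < ln (ln x) ->
  Phi r s alpha beta h = ln x + c -> Phi_ln (ln h) = exp (ln (ln x)) + c.
Proof.
  intros Hh Hx Heq. destruct (ln_ln_pos_gt1 x Hx) as [HL _].
  rewrite <- Phi_ln_ln, exp_ln; lra.
Qed.

Lemma Phi_ln_decreasing t u : t < u -> Phi_ln u < Phi_ln t.
Proof.
  intros Htu. rewrite !Phi_lnE.
  assert (exp (- (r * u)) < exp (- (r * t))) by (apply exp_increasing; nra).
  assert (exp (- (s * u)) < exp (- (s * t))) by (apply exp_increasing; nra).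
  nra.
Qed.

Lemma alpha_term_le : exists K, forall y t d, 0 < y -> d <= exp y ->
  Phi_ln t = exp y + d -> 2 * alpha * exp (- (r * t)) <= K / y * exp y.
Proof.
  set (delta := (s - r) / s).
  assert (Hdelta : 0 < delta) by (apply Rdiv_lt_0_compat; lra).
  exists (2 * alpha * exp (- (r / s * ln beta)) / delta).
  intros y t d Hy Hd Heq. rewrite Phi_lnE in Heq.
  pose proof (exp_pos (- (r * t))) as HW.
  assert (HV : - (s * t) <= y - ln beta).
  { apply exp_le_exp. unfold Rminus. rewrite exp_plus, (exp_Ropp (ln beta)), exp_ln by lra.
    apply (Rmult_le_reg_l (2 * beta)); [lra|].
    replace (2 * beta * (exp y * / beta)) with (2 * exp y) by (field; lra). nra. }
  assert (HWy : exp (- (r * t)) <= exp (- (r / s * ln beta)) * exp (- (delta * y)) * exp y).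
  { rewrite <- !exp_plus. apply exp_le_exp.
    replace (- (r * t)) with (r / s * - (s * t)) by (field; lra).
    unfold delta. apply (Rmult_le_compat_l (r / s)) in HV;
      [| left; apply Rdiv_lt_0_compat; lra].
    replace (- (r / s * ln beta) + - ((s - r) / s * y) + y)
      with (r / s * (y - ln beta)) by (field; lra).
    exact HV. }
  pose proof (exp_neg_le_inv (delta * y) ltac:(nra)) as Hdecay.
  pose proof (exp_pos (- (r / s * ln beta))). pose proof (exp_pos y).
  replace (2 * alpha * exp (- (r / s * ln beta)) / delta / y * exp y)
    with (2 * alpha * (exp (- (r / s * ln beta)) * / (delta * y) * exp y))
    by (field; lra).
  apply Rmult_le_compat_l; [lra|].
  eapply Rle_trans; [exact HWy|].
  apply Rmult_le_compat_r; [lra|]. apply Rmult_le_compat_l; lra.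
Qed.

Lemma beta_term_ratio : exists C, forall y t d, 27 <= y -> Rabs d <= y ^ 2 ->
  Phi_ln t = exp y + d -> Rabs (2 * beta * exp (- (s * t)) / exp y - 1) <= C / y.
Proof.
  destruct alpha_term_le as [K HK].
  exists (27 + K). intros y t d Hy Hd Heq.
  pose proof (exp_pos y) as HL. pose proof (exp_pos (- (r * t))) as HW.
  pose proof (sqr_div_exp_le y ltac:(lra)) as Hsq.
  assert (Hsq1 : y ^ 2 <= exp y).
  { assert (27 / y <= 1) by (apply (Rdiv_le_1 27 y); lra).
    apply (Rmult_le_reg_r (/ exp y)); [apply Rinv_0_lt_compat; lra|].
    rewrite Rinv_r by lra. unfold Rdiv in Hsq. lra. }
  apply Rabs_le_between in Hd.
  specialize (HK y t d ltac:(lra) ltac:(lra) Heq).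
  rewrite Phi_lnE in Heq.
  assert (Hsplit : 2 * beta * exp (- (s * t)) / exp y - 1
                   = d / exp y - 2 * alpha * exp (- (r * t)) / exp y).
  { replace (2 * beta * exp (- (s * t))) with (exp y + d - 2 * alpha * exp (- (r * t)))
      by lra.
    field; lra. }
  assert (Hd' : Rabs (d / exp y) <= 27 / y).
  { eapply Rle_trans; [|exact Hsq]. rewrite Rabs_div, (Rabs_pos_eq (exp y)) by lra.
    apply Rmult_le_compat_r; [left; apply Rinv_0_lt_compat; lra|].
    apply Rabs_le; lra. }
  assert (HK' : 0 <= 2 * alpha * exp (- (r * t)) / exp y <= K / y).
  { split; [apply Rdiv_le_0_compat; nra|].
    apply (Rmult_le_reg_r (exp y)); [lra|]. field_simplify; lra. }
  rewrite Hsplit. apply Rabs_le_between in Hd'. apply Rabs_le.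
  replace ((27 + K) / y) with (27 / y + K / y) by (field; lra). lra.
Qed.

Lemma beta_term_lower : exists y0, 0 < y0 /\ forall y t, y0 <= y ->
  Phi_ln t = exp y - y ^ 2 -> exp y <= 4 * beta * exp (- (s * t)).
Proof.
  destruct beta_term_ratio as [C HC].
  pose proof (Rmax_l 27 (2 * C)). pose proof (Rmax_r 27 (2 * C)).
  exists (Rmax 27 (2 * C)). split; [lra|].
  intros y t Hy Heq.
  specialize (HC y t (- y ^ 2) ltac:(lra)).
  rewrite Rabs_Ropp, Rabs_pos_eq in HC by (apply pow2_ge_0).
  specialize (HC (Rle_refl _) Heq). apply Rabs_le_between' in HC.
  assert (C / y <= 1 / 2).
  { apply (Rmult_le_reg_r y); [lra|]. field_simplify; lra. }
  pose proof (exp_pos y).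
  assert (Hhalf : 1 / 2 <= 2 * beta * exp (- (s * t)) / exp y) by lra.
  apply (Rmult_le_compat_r (2 * exp y)) in Hhalf; [|lra].
  field_simplify in Hhalf; lra.
Qed.

Lemma beta_gap_le y tp ts :
  Phi_ln tp = exp y + y ^ 2 -> Phi_ln ts = exp y - y ^ 2 ->
  tp <= ts /\ beta * (exp (- (s * tp)) - exp (- (s * ts))) <= y ^ 2.
Proof.
  intros Hp Hs.
  assert (Hle : tp <= ts).
  { destruct (Rle_or_lt tp ts) as [|Hlt]; auto.
    pose proof (Phi_ln_decreasing ts tp Hlt). pose proof (pow2_ge_0 y). lra. }
  split; [exact Hle|].
  assert (exp (- (r * ts)) <= exp (- (r * tp))) by (apply exp_le_exp; nra).
  rewrite Phi_lnE in Hp, Hs. nra.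
Qed.

Lemma log_gap_le : exists C, forall y tp ts, 0 < y ->
  exp y <= 4 * beta * exp (- (s * ts)) ->
  Phi_ln tp = exp y + y ^ 2 -> Phi_ln ts = exp y - y ^ 2 ->
  0 <= ts - tp <= C / y.
Proof.
  exists (4 * 27 / s). intros y tp ts Hy Hlow Hp Hs.
  destruct (beta_gap_le y tp ts Hp Hs) as [Hle Hgap].
  pose proof (exp_sub_exp_ge (- (s * tp)) (- (s * ts))) as Hconv.
  pose proof (sqr_div_exp_le y Hy) as Hsq.
  pose proof (exp_pos y).
  split; [lra|].
  assert (Hmain : s * (ts - tp) * exp y <= 4 * y ^ 2).
  { assert (0 <= s * (ts - tp)) by nra.
    replace (- (s * tp) - - (s * ts)) with (s * (ts - tp)) in Hconv by ring.
    nra. }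
  apply (Rmult_le_reg_r (s * exp y)); [nra|].
  replace (4 * 27 / s / y * (s * exp y)) with (4 * (27 / y) * exp y) by (field; lra).
  replace ((ts - tp) * (s * exp y)) with (s * (ts - tp) * exp y) by ring.
  eapply Rle_trans; [exact Hmain|].
  replace (4 * y ^ 2) with (4 * (y ^ 2 / exp y) * exp y) by (field; lra).
  apply Rmult_le_compat_r; lra.
Qed.

Lemma alpha_gap_le : exists C, forall y tp ts, 0 < y ->
  exp y <= 4 * beta * exp (- (s * ts)) ->
  Phi_ln tp = exp y + y ^ 2 -> Phi_ln ts = exp y - y ^ 2 ->
  0 <= exp (- (r * tp)) - exp (- (r * ts)) <= C / y.
Proof.
  set (delta := (s - r) / s).
  assert (Hdelta : 0 < delta) by (apply Rdiv_lt_0_compat; lra).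
  set (M := exp (delta * ln (4 * beta)) / beta).
  assert (HM : 0 < M) by (apply Rdiv_lt_0_compat; [apply exp_pos | lra]).
  exists (M * 27 / delta ^ 3). intros y tp ts Hy Hlow Hp Hs.
  destruct (beta_gap_le y tp ts Hp Hs) as [Hle Hgap].
  pose proof (exp_gap_rate_le r s tp ts ltac:(lra) Hle) as Hrate.
  assert (Hgrowth : exp ((s - r) * ts) <= exp (delta * ln (4 * beta)) * exp (- (delta * y))).
  { rewrite <- exp_plus. apply exp_le_exp.
    assert (Hts : y <= ln (4 * beta) - s * ts).
    { apply exp_le_exp. unfold Rminus. rewrite exp_plus, (exp_Ropp (s * ts)), exp_ln by lra.
      rewrite <- exp_Ropp. lra. }
    replace ((s - r) * ts) with (delta * (s * ts)) by (unfold delta; field; lra).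
    replace (delta * ln (4 * beta) + - (delta * y)) with (delta * (ln (4 * beta) - y)) by ring.
    apply Rmult_le_compat_l; lra. }
  assert (exp (- (r * ts)) <= exp (- (r * tp))) by (apply exp_le_exp; nra).
  split; [lra|].
  pose proof (sqr_mul_exp_neg_le delta y Hdelta Hy) as Hdecay.
  pose proof (exp_pos ((s - r) * ts)).
  assert (exp (- (s * ts)) <= exp (- (s * tp))) by (apply exp_le_exp; nra).
  assert (Hdiff : exp (- (r * tp)) - exp (- (r * ts)) <= exp ((s - r) * ts) * (y ^ 2 / beta)).
  { eapply Rle_trans; [exact Hrate|]. apply Rmult_le_compat_l; [lra|].
    apply (Rmult_le_reg_l beta); [lra|]. field_simplify; lra. }
  eapply Rle_trans; [exact Hdiff|].
  eapply Rle_trans.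
  { apply Rmult_le_compat_r; [apply Rdiv_le_0_compat; [apply pow2_ge_0 | lra] | exact Hgrowth]. }
  replace (exp (delta * ln (4 * beta)) * exp (- (delta * y)) * (y ^ 2 / beta))
    with (M * (y ^ 2 * exp (- (delta * y)))) by (unfold M; field; lra).
  replace (M * 27 / delta ^ 3 / y) with (M * (27 / (delta ^ 3 * y)))
    by (field; split; lra).
  apply Rmult_le_compat_l; lra.
Qed.

End LogCoordinates.

Lemma div_Rpower_scale_eq s beta h L : 0 < s -> 0 < beta -> 0 < h -> 0 < L ->
  h / Rpower (L / (2 * beta)) (- (1 / s))
  = Rpower (2 * beta * exp (- (s * ln h)) / L) (- (1 / s)).
Proof.
  intros Hs Hb Hh HL. unfold Rpower.
  assert (H2b : 0 < 2 * beta) by lra.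
  pose proof (exp_pos (- (s * ln h))) as HV.
  rewrite (ln_div L), (ln_div (2 * beta * _)), (ln_mult (2 * beta)), ln_exp
    by (try assumption; apply Rmult_lt_0_compat; assumption).
  rewrite <- (exp_ln h) at 1 by exact Hh.
  unfold Rdiv at 1. rewrite <- exp_Ropp, <- exp_plus. f_equal. field. lra.
Qed.

Lemma Rpower_exp_ratio_eq r alpha a hp hs :
  Rpower hp a * exp (- (2 * alpha / Rpower hp r))
    / (Rpower hs a * exp (- (2 * alpha / Rpower hs r)))
  = exp (a * (ln hp - ln hs) + 2 * alpha * (exp (- (r * ln hs)) - exp (- (r * ln hp)))).
Proof.
  unfold Rpower, Rdiv. rewrite <- !exp_Ropp, <- !exp_plus, <- exp_Ropp, <- exp_plus.
  f_equal. ring.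
Qed.

Section Asymptotics.

Variables r s alpha beta : R.
Hypotheses (hr : 0 < r) (hrs : r < s) (halpha : 0 < alpha) (hbeta : 0 < beta).
Variables hstar hplus : nat -> R.
Hypotheses
  (hstar_pos : forall n : nat, (3 <= n)%nat -> 0 < hstar n)
  (hstar_eq : forall n : nat, (3 <= n)%nat ->
     Phi r s alpha beta (hstar n) = ln (INR n) - (ln (ln (INR n))) ^ 2)
  (hplus_pos : forall n : nat, (3 <= n)%nat -> 0 < hplus n)
  (hplus_eq : forall n : nat, (3 <= n)%nat ->
     Phi r s alpha beta (hplus n) = ln (INR n) + (ln (ln (INR n))) ^ 2).

Lemma Phi_ln_hplus n : (3 <= n)%nat -> 0 < ln (ln (INR n)) ->
  Phi_ln r s alpha beta (ln (hplus n)) = exp (ln (ln (INR n))) + ln (ln (INR n)) ^ 2.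
Proof. intros Hn Hy. apply Phi_ln_of_Phi_eq; auto. Qed.

Lemma Phi_ln_hstar n : (3 <= n)%nat -> 0 < ln (ln (INR n)) ->
  Phi_ln r s alpha beta (ln (hstar n)) = exp (ln (ln (INR n))) - ln (ln (INR n)) ^ 2.
Proof. intros Hn Hy. apply Phi_ln_of_Phi_eq; auto. Qed.

Lemma hplus_scaling_lim :
  is_lim_seq (fun n => hplus n / Rpower (ln (INR n) / (2 * beta)) (- (1 / s))) 1.
Proof.
  destruct (beta_term_ratio r s alpha beta hr hrs halpha hbeta) as [C HC].
  set (q n := 2 * beta * exp (- (s * ln (hplus n))) / ln (INR n)).
  assert (Hq : is_lim_seq q 1).
  { apply (is_lim_seq_abs_sub_le_div q _ 1 C is_lim_seq_ln_ln_INR).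
    generalize (eventually_ln_ln_INR_ge 27). apply filter_imp. intros n [Hn Hy].
    destruct (ln_ln_pos_gt1 (INR n) ltac:(lra)) as [HL _].
    unfold q. rewrite <- (exp_ln (ln (INR n))) at 1 by lra.
    apply (HC _ _ (ln (ln (INR n)) ^ 2) Hy).
    - rewrite Rabs_pos_eq by apply pow2_ge_0. lra.
    - apply Phi_ln_hplus; auto; lra. }
  assert (Hcont : continuity_pt (fun x => Rpower x (- (1 / s))) 1).
  { apply derivable_continuous_pt. eexists. apply derivable_pt_lim_power, Rlt_0_1. }
  pose proof (is_lim_seq_continuous _ q 1 Hcont Hq) as Hlim. cbv beta in Hlim.
  replace (Rpower 1 (- (1 / s))) with 1 in Hlim
    by (unfold Rpower; rewrite ln_1, Rmult_0_r; symmetry; apply exp_0).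
  refine (is_lim_seq_ext_loc _ _ 1 _ Hlim).
  generalize (eventually_ln_ln_INR_ge 1). apply filter_imp. intros n [Hn Hy].
  destruct (ln_ln_pos_gt1 (INR n) ltac:(lra)) as [HL _].
  symmetry. apply div_Rpower_scale_eq; auto; lra.
Qed.

Lemma hplus_hstar_ratio_lim a :
  is_lim_seq (fun n =>
    (Rpower (hplus n) a * exp (- (2 * alpha / Rpower (hplus n) r)))
    / (Rpower (hstar n) a * exp (- (2 * alpha / Rpower (hstar n) r)))) 1.
Proof.
  destruct (beta_term_lower r s alpha beta hr hrs halpha hbeta) as [y0 [Hy0 Hlow]].
  destruct (log_gap_le r s alpha beta hr hrs halpha hbeta) as [C1 HC1].
  destruct (alpha_gap_le r s alpha beta hr hrs halpha hbeta) as [C2 HC2].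
  set (E n := a * (ln (hplus n) - ln (hstar n))
              + 2 * alpha * (exp (- (r * ln (hstar n))) - exp (- (r * ln (hplus n))))).
  assert (HE : is_lim_seq E 0).
  { apply (is_lim_seq_abs_sub_le_div E _ 0 (Rabs a * C1 + 2 * alpha * C2)
             is_lim_seq_ln_ln_INR).
    generalize (eventually_ln_ln_INR_ge y0). apply filter_imp. intros n [Hn Hy].
    pose proof (Phi_ln_hplus n Hn ltac:(lra)) as Hp.
    pose proof (Phi_ln_hstar n Hn ltac:(lra)) as Hs.
    set (y := ln (ln (INR n))) in *.
    specialize (Hlow _ _ Hy Hs).
    specialize (HC1 y _ _ ltac:(lra) Hlow Hp Hs).
    specialize (HC2 y _ _ ltac:(lra) Hlow Hp Hs).
    unfold E. rewrite Rminus_0_r.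
    replace ((Rabs a * C1 + 2 * alpha * C2) / y) with (Rabs a * (C1 / y) + 2 * alpha * (C2 / y))
      by (field; lra).
    eapply Rle_trans; [apply Rabs_triang|].
    rewrite (Rabs_mult a), (Rabs_mult (2 * alpha)), (Rabs_pos_eq (2 * alpha)) by lra.
    rewrite Rabs_minus_sym, (Rabs_pos_eq (ln (hstar n) - _)) by lra.
    rewrite Rabs_minus_sym, (Rabs_pos_eq (exp _ - _)) by lra.
    apply Rplus_le_compat; apply Rmult_le_compat_l; try apply Rabs_pos; lra. }
  pose proof (is_lim_seq_continuous exp E 0
                (derivable_continuous_pt _ _ (derivable_pt_exp 0)) HE) as Hlim.
  rewrite exp_0 in Hlim.
  refine (is_lim_seq_ext_loc _ _ 1 _ Hlim).
  exists 0%nat. intros n _. symmetry. apply Rpower_exp_ratio_eq.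
Qed.

Lemma hplus_remainder_lim b :
  is_lim_seq (fun n =>
    Rpower (ln (INR n)) b * INR n
    * exp (- (2 * alpha / Rpower (hplus n) r) - 2 * beta / Rpower (hplus n) s)) 0.
Proof.
  apply (is_lim_seq_abs_sub_le_div _ _ 0 1 is_lim_seq_ln_ln_INR).
  generalize (eventually_ln_ln_INR_ge (Rmax 1 (b + 1))). apply filter_imp.
  intros n [Hn Hy]. pose proof (Rmax_l 1 (b + 1)). pose proof (Rmax_r 1 (b + 1)).
  destruct (ln_ln_pos_gt1 (INR n) ltac:(lra)) as [HL Hx].
  replace (- (2 * alpha / Rpower (hplus n) r) - 2 * beta / Rpower (hplus n) s)
    with (- Phi r s alpha beta (hplus n)) by (unfold Phi; ring).
  rewrite hplus_eq by exact Hn.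
  unfold Rpower. rewrite <- (exp_ln (INR n)) at 2 by lra.
  set (y := ln (ln (INR n))) in *. rewrite <- !exp_plus, Rminus_0_r, Rabs_pos_eq
    by (left; apply exp_pos).
  eapply Rle_trans; [apply exp_le_exp with (y := - y); nra|].
  unfold Rdiv. rewrite Rmult_1_l. apply exp_neg_le_inv. lra.
Qed.

End Asymptotics.

Theorem lemma9 (r s alpha beta : R)
  (hr : 0 < r) (hrs : r < s) (halpha : 0 < alpha) (hbeta : 0 < beta)
  (hstar hplus : nat -> R)
  (hstar_pos : forall n : nat, (3 <= n)%nat -> 0 < hstar n)
  (hstar_eq : forall n : nat, (3 <= n)%nat ->
     Phi r s alpha beta (hstar n) = ln (INR n) - (ln (ln (INR n))) ^ 2)
  (hplus_pos : forall n : nat, (3 <= n)%nat -> 0 < hplus n)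
  (hplus_eq : forall n : nat, (3 <= n)%nat ->
     Phi r s alpha beta (hplus n) = ln (INR n) + (ln (ln (INR n))) ^ 2) :
  is_lim_seq (fun n => hplus n / Rpower (ln (INR n) / (2 * beta)) (- (1 / s))) 1
  /\ (forall a : R,
        is_lim_seq (fun n =>
          (Rpower (hplus n) a * exp (- (2 * alpha / Rpower (hplus n) r)))
          / (Rpower (hstar n) a * exp (- (2 * alpha / Rpower (hstar n) r)))) 1)
  /\ (forall b : R,
        is_lim_seq (fun n =>
          Rpower (ln (INR n)) b * INR n
          * exp (- (2 * alpha / Rpower (hplus n) r) - 2 * beta / Rpower (hplus n) s)) 0).
Proof.
  split; [|split].
  - exact (hplus_scaling_lim r s alpha beta hr hrs halpha hbeta hplus hplus_pos hplus_eq).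
  - intros a. exact (hplus_hstar_ratio_lim r s alpha beta hr hrs halpha hbeta
                       hstar hplus hstar_pos hstar_eq hplus_pos hplus_eq a).
  - intros b. exact (hplus_remainder_lim r s alpha beta hplus hplus_eq b).
Qed.
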